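(* Let $p\geq 3$ be prime and $n\geq 2$. Then in $\mathbb{L}_p$, \[\left(\sum_{l=0}^{p-1}\frac{(-1)^{ln}}{l!}\zeta_{2(p-1)}^l p^{\frac{l}{p^{n-1}(p-1)}}\right)^{p^{n-1}}-1=\sum_{l=1}^{p-1}\frac{(-1)^l}{[l!]}\zeta_{2(p-1)}^l p^{\frac{l}{p-1}}+\zeta_{2(p-1)}\, p^{1+\frac{1}{p(p-1)}}+O\left(p^{1+\frac{1}{p-1}}\right).\]
   Context: $\mathbb{L}_p$ is the $p$-adic Mal'cev–Neumann field of formal sums $\sum_{x\in\mathbb{Q}}[\alpha_x]p^x$ ($\alpha_x\in\bar{\mathbb{F}}_p$, $[\cdot]$ Teichmüller lift into $W(\bar{\mathbb{F}}_p)$, well-ordered support), containing $\mathbb{Q}_p$, with valuation $v_p$ = minimum of support; $p^x$ is the element with support $\{x\}$ and coefficient $1$. $\zeta_{2(p-1)}$ is (the Teichmüller lift of) a fixed primitive $2(p-1)$-th root of unity in $\bar{\mathbb{F}}_p$. $l!$ is the ordinary factorial (a rational number), while $[l!]$ is the Teichmüller lift of $l!\bmod p$. Notation: $\alpha=\beta+O(p^x)$ means $v_p(\alpha-\beta)\geq x$. *)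

From HB Require Import structures.
From mathcomp Require Import all_boot all_order all_algebra.
Set Implicit Arguments. Unset Strict Implicit. Unset Printing Implicit Defensive.
Import Order.TTheory GRing.Theory Num.Theory.
Local Open Scope ring_scope.

Definition padic_val (p : nat) (q : rat) : rat :=
  ((logn p `|numq q|%N)%:Z - (logn p `|denq q|%N)%:Z)%:~R.

(* Abstract interface for the part of the p-adic Mal'cev--Neumann field L_p
   used in the statement: a field K with a valuation v (meaningful on nonzero
   elements) extending v_p on Q, and the family x |-> p^x of elements with
   p^(x+y) = p^x p^y, p^1 = p, v(p^x) = x. *)
Definition Lp_model (p : nat) (K : fieldType) (v : K -> rat) (pw : rat -> K)
  : Prop :=
  [/\ (forall a b : K, a != 0 -> b != 0 -> v (a * b) = v a + v b) /\
      (forall a b : K, a != 0 -> b != 0 -> a + b != 0 ->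
        Num.min (v a) (v b) <= v (a + b)),
      forall q : rat, q != 0 -> ratr q != 0 :> K /\ v (ratr q) = padic_val p q,
      forall x y : rat, pw (x + y) = pw x * pw y,
      pw 1 = p%:R &
      forall x : rat, pw x != 0 /\ v (pw x) = x].

(* alpha = O(p^x), i.e. v(alpha) >= x (with v(0) = +oo). *)
Definition bigO (K : fieldType) (v : K -> rat) (a : K) (x : rat) : Prop :=
  a = 0 \/ x <= v a.

(* t is the Teichmueller lift of the residue of r mod p (r prime to p):
   a (p-1)-th root of unity congruent to r modulo p. *)
Definition teich_of (p : nat) (K : fieldType) (v : K -> rat) (r : nat) (t : K)
  : Prop :=
  t ^+ (p - 1) = 1 /\ bigO v (t - r%:R) 1.

From HB Require Import structures.
From mathcomp Require Import all_boot all_order all_algebra ring lra zify.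
Import Order.TTheory GRing.Theory Num.Theory.
Local Open Scope ring_scope.

(* Let s be the truncated exponential sum_(l < p) X^l / l! and
   pi = (-1)^n zeta p^(1/(p^(n-1)(p-1))), so that the left-hand side is
   s(pi)^(p^(n-1)) - 1.  Put x = pi^(p^(n-2)) = zeta p^(1/(p(p-1))), so that
   x^p = -zeta p^(1/(p-1)).
   The coefficients a of s are p-integral with a^p = a mod p, hence
   s(y)^p = s(y^p) mod p for integral y, and raising a congruence modulo p^c
   (c >= 1) to the p-th power gains a factor p: s(pi)^(p^(n-1)) = s(x)^p
   mod p^2.  Below degree p the coefficients of s^p are those of exp(pX),
   namely p^k / k!, which gives s(x)^p = s(x^p) + p x mod p^(1 + 1/(p-1)).
   Finally s(x^p) - 1 = sum_(1 <= l < p) x^(pl) / l!, and replacing 1/l! by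
   the Teichmueller lift 1/[l!] costs a factor p. *)

Set Implicit Arguments.
Unset Strict Implicit.
Unset Printing Implicit Defensive.

Lemma exprD_sub_ends (R : comNzRingType) (a b : R) n : (0 < n)%N ->
  (a + b) ^+ n - a ^+ n - b ^+ n
    = \sum_(1 <= i < n) a ^+ (n - i) * b ^+ i *+ 'C(n, i).
Proof.
move=> n_gt0; rewrite exprDn.
rewrite -(big_mkord xpredT (fun i => a ^+ (n - i) * b ^+ i *+ 'C(n, i))).
rewrite big_ltn // big_nat_recr //=.
rewrite subn0 subnn bin0 binn !expr0 mulr1 mul1r !mulr1n.
ring.
Qed.

Lemma prim_expr_half (R : idomainType) m (z : R) :
  (0 < m)%N -> (2 * m)%N.-primitive_root z -> z ^+ m = -1.
Proof.
move=> m_gt0 z_prim.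
have zm_neq1 : z ^+ m != 1.
  by rewrite -(prim_order_dvd z_prim); apply/negP => /dvdn_leq; lia.
have : (z ^+ m - 1) * (z ^+ m + 1) = 0.
  by rewrite -subr_sqr expr1n -exprM mulnC prim_expr_order // subrr.
by move/eqP; rewrite mulf_eq0 subr_eq0 (negbTE zm_neq1) addr_eq0 => /eqP.
Qed.

Lemma expr_expn_odd (R : comNzRingType) (z : R) q j :
  odd q -> z ^+ q = - z -> z ^+ (q ^ j) = (-1) ^+ j * z.
Proof.
move=> q_odd zq; have sign_q : (-1 : R) ^+ q = -1 by rewrite -signr_odd q_odd.
elim: j => [|j IHj]; first by rewrite expn0 expr1 mul1r.
rewrite expnSr exprM IHj exprMn -exprM mulnC exprM sign_q zq.
by rewrite mulrN exprS mulN1r mulNr.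
Qed.

Lemma prime_ndvd_fact p i : prime p -> (i < p)%N -> ~~ (p %| i`!)%N.
Proof.
move=> p_pr; elim: i => [|i IHi] ltip.
  by rewrite dvdn1; apply: contraTN p_pr => /eqP ->.
rewrite factS Euclid_dvdM // negb_or (IHi (ltnW ltip)) andbT.
by apply/negP => /(dvdn_leq (ltn0Sn i)); rewrite leqNgt ltip.
Qed.

Section TruncatedExponential.
Variable F : fieldType.
Hypothesis F_char0 : has_pchar0 F.

Definition trunc_exp m : {poly F} := \poly_(i < m) (i`!%:R)^-1.

Lemma inv_factS_mulrn i : (i.+1`!%:R : F)^-1 *+ i.+1 = (i`!%:R)^-1.
Proof.
rewrite -(mulr_natr (i.+1`!%:R)^-1) factS natrM invfM mulrAC mulVf ?mul1r //.
by rewrite ((pcharf0P F).1 F_char0).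
Qed.

Lemma horner_trunc_exp m x : (trunc_exp m).[x] = \sum_(i < m) (i`!%:R)^-1 * x ^+ i.
Proof. exact: horner_poly. Qed.

Lemma deriv_trunc_exp m : (0 < m)%N ->
  (trunc_exp m)^`() = trunc_exp m - (m.-1`!%:R)^-1 *: 'X^(m.-1).
Proof.
move=> m_gt0; apply/polyP => i.
rewrite coef_deriv coefB coefZ coefXn !coef_poly.
case: (ltngtP i.+1 m) => [ltim|ltmi|<-].
- by rewrite ltn_eqF ?ltn_predRL // mulr0 subr0 inv_factS_mulrn.
- by rewrite mul0rn (_ : (i == m.-1) = false) ?mulr0 ?subr0 //; apply/negbTE/eqP; lia.
- by rewrite mul0rn /= eqxx mulr1 subrr.
Qed.

(* Compare coefficients in (s^n)' = n s^n - n s^(n-1) X^(m-1)/(m-1)!, s = trunc_exp m. *)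
Lemma coef_trunc_exp_exp m n k : (k < m)%N ->
  (trunc_exp m ^+ n)`_k = n%:R ^+ k / k`!%:R.
Proof.
move=> ltkm; have m_gt0 : (0 < m)%N by apply: leq_ltn_trans ltkm.
elim: k ltkm => [|k IHk] ltkm.
  rewrite -horner_coef0 horner_exp horner_coef0 coef_poly m_gt0.
  by rewrite fact0 invr1 expr1n expr0 mul1r.
have dE : (trunc_exp m ^+ n)^`()`_k = (trunc_exp m ^+ n)`_k *+ n.
  rewrite deriv_exp deriv_trunc_exp // mulrBl coefMn coefB -scalerAl coefZ.
  rewrite coefXnM ltn_predRL ltkm mulr0 subr0.
  by case: (n) => [|n']; rewrite ?mulr0n // -exprS.
rewrite coef_deriv IHk ?(ltnW ltkm) // in dE.
have k1_neq0 : (k.+1%:R : F) != 0 by rewrite ((pcharf0P F).1 F_char0).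
apply: (mulIf k1_neq0); rewrite !mulr_natr dE -[RHS]mulrnAr inv_factS_mulrn.
by rewrite exprSr mulrAC mulr_natr.
Qed.

End TruncatedExponential.

Section Valuation.
Variables (p : nat) (K : fieldType) (v : K -> rat) (pw : rat -> K).
Hypothesis p_pr : prime p.
Hypothesis Lp : Lp_model p v pw.

Local Notation O := (bigO v).

Lemma valM a b : a != 0 -> b != 0 -> v (a * b) = v a + v b.
Proof. by case: Lp => [[valM _] _ _ _ _]; apply: valM. Qed.

Lemma val1 : v 1 = 0.
Proof. by apply: (@addrI _ (v 1)); rewrite -valM ?oner_neq0 // mulr1 addr0. Qed.

Lemma valV a : a != 0 -> v a^-1 = - v a.
Proof.
move=> a_neq0; apply/eqP; rewrite -subr_eq0 opprK addrC -valM ?invr_eq0 //.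
by rewrite mulfV // val1.
Qed.

Lemma valX a k : a != 0 -> v (a ^+ k) = k%:R * v a.
Proof.
move=> a_neq0; elim: k => [|k IHk]; first by rewrite val1 mul0r.
by rewrite exprS valM ?expf_neq0 // IHk -natr1 mulrDl mul1r addrC.
Qed.

Lemma val_unity_root a k : (0 < k)%N -> a ^+ k = 1 -> a != 0 /\ v a = 0.
Proof.
move=> k_gt0 ak1; have a_neq0 : a != 0.
  by apply: contra_eq_neq ak1 => ->; rewrite expr0n gtn_eqF // eq_sym oner_neq0.
split=> //; have := valX k a_neq0; rewrite ak1 val1 => /eqP.
by rewrite eq_sym mulf_eq0 pnatr_eq0 eqn0Ngt k_gt0 => /eqP.
Qed.

Lemma bigO_unity_root a k : (0 < k)%N -> a ^+ k = 1 -> O a 0.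
Proof. by move=> k_gt0 ak1; right; rewrite (val_unity_root k_gt0 ak1).2. Qed.

Lemma valN1 : v (-1) = 0.
Proof. by case: (@val_unity_root (-1) 2) => //; rewrite sqrrN expr1n. Qed.

Lemma val_natr m : (0 < m)%N -> (m%:R : K) != 0 /\ v m%:R = (logn p m)%:R.
Proof.
move=> m_gt0; case: Lp => [_ val_ratr _ _ _].
have m_neq0 : (m%:R : rat) != 0 by rewrite pnatr_eq0 -lt0n.
have [] := val_ratr _ m_neq0; rewrite ratr_nat => -> ->.
split=> //; rewrite /padic_val (_ : m%:R = m%:Z%:~R) //.
by rewrite numq_int denq_int logn1 subr0.
Qed.

Lemma Lp_char0 : has_pchar0 K.
Proof.
apply/pcharf0P => m; case: (posnP m) => [->|m_gt0]; first by rewrite eqxx.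
by rewrite (negbTE (val_natr m_gt0).1).
Qed.

Lemma val_natr_coprime m : ~~ (p %| m)%N -> (m%:R : K) != 0 /\ v m%:R = 0.
Proof.
move=> p_ndvd_m; have m_gt0 : (0 < m)%N by case: m p_ndvd_m; rewrite ?dvdn0.
by have [? ->] := val_natr m_gt0; rewrite logn_coprime // prime_coprime.
Qed.

Lemma pwD x y : pw (x + y) = pw x * pw y.
Proof. by case: Lp. Qed.

Lemma pw1 : pw 1 = p%:R.
Proof. by case: Lp. Qed.

Lemma pw_val x : pw x != 0 /\ v (pw x) = x.
Proof. by case: Lp => _ _ _ _; apply. Qed.

Lemma pw_natM k y : pw (k%:R * y) = pw y ^+ k.
Proof.
have pw0 : pw 0 = 1 by apply: (mulIf (pw_val 0).1); rewrite -pwD addr0 mul1r.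
elim: k => [|k IHk]; first by rewrite mul0r pw0.
by rewrite -natr1 mulrDl mul1r pwD IHk exprSr.
Qed.

Lemma bigOW a c d : O a c -> d <= c -> O a d.
Proof. by case=> [->|a_c] dc; [left|right; apply: le_trans a_c]. Qed.

Lemma bigO1 : O 1 0.
Proof. by right; rewrite val1. Qed.

Lemma bigOD a b c : O a c -> O b c -> O (a + b) c.
Proof.
case=> [->|a_c]; first by rewrite add0r.
case=> [->|b_c]; first by rewrite addr0; right.
have [->|a_neq0] := eqVneq a 0; first by rewrite add0r; right.
have [->|b_neq0] := eqVneq b 0; first by rewrite addr0; right.
have [->|ab_neq0] := eqVneq (a + b) 0; first by left.
case: Lp => [[_ val_add] _ _ _ _]; right.
by apply: le_trans (val_add _ _ a_neq0 b_neq0 ab_neq0); rewrite le_min a_c b_c.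
Qed.

Lemma bigOM a b c d : O a c -> O b d -> O (a * b) (c + d).
Proof.
case=> [->|a_c]; first by rewrite mul0r; left.
case=> [->|b_d]; first by rewrite mulr0; left.
have [->|ab_neq0] := eqVneq (a * b) 0; first by left.
move: ab_neq0; rewrite mulf_eq0 negb_or => /andP[a_neq0 b_neq0].
by right; rewrite valM // lerD.
Qed.

Lemma bigON a c : O a c -> O (- a) c.
Proof.
by move=> a_c; rewrite -mulN1r -[c]add0r; apply: bigOM a_c; right; rewrite valN1.
Qed.

Lemma bigOX a c k : O a c -> O (a ^+ k) (k%:R * c).
Proof.
move=> a_c; elim: k => [|k IHk]; first by rewrite mul0r; apply: bigO1.
by rewrite exprS -natr1 mulrDl mul1r addrC; apply: bigOM.
Qed.

Lemma bigOX0 a k : O a 0 -> O (a ^+ k) 0.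
Proof. by move/(bigOX k); rewrite mulr0. Qed.

Lemma bigO_sum (I : Type) (r : seq I) (C : pred I) (F : I -> K) c :
  (forall i, C i -> O (F i) c) -> O (\sum_(i <- r | C i) F i) c.
Proof.
move=> F_c; elim/big_rec: _ => [|i s Ci s_c]; first by left.
exact: bigOD (F_c i Ci) s_c.
Qed.

Lemma bigO_pw a y : O a 0 -> O (a * pw y) y.
Proof.
move=> a_int; have pw_y : O (pw y) y by right; rewrite (pw_val y).2.
by apply: bigOW (bigOM a_int pw_y) _; rewrite add0r.
Qed.

Lemma bigO_mulrn_dvd a c m : O a c -> (p %| m)%N -> O (a *+ m) (1 + c).
Proof.
move=> a_c p_dvd_m; rewrite -mulr_natl; apply: bigOM _ a_c.
have [->|m_gt0] := posnP m; first by left.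
right; rewrite (val_natr m_gt0).2 ler1n logn_gt0 mem_primes p_pr m_gt0.
exact: p_dvd_m.
Qed.

Lemma bigO_natr_frobenius m : O (m%:R ^+ p - m%:R : K) 1.
Proof.
have le_m_mp : (m <= m ^ p)%N.
  by case: m => // m; rewrite -{1}(expn1 m.+1) leq_pexp2l // prime_gt0.
rewrite -natrX -natrB //; apply: bigOW (bigO_mulrn_dvd bigO1 _) _.
  by rewrite -eqn_mod_dvd // fermat_little.
by rewrite addr0.
Qed.

Lemma bigO_invf_unit a : a != 0 -> v a = 0 -> O a^-1 0.
Proof. by move=> a_neq0 va0; right; rewrite valV // va0 oppr0. Qed.

Lemma bigO_invf_frobenius a :
  a != 0 -> v a = 0 -> O (a ^+ p - a) 1 -> O (a^-1 ^+ p - a^-1) 1.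
Proof.
move=> a_neq0 va0 a_frob.
have -> : a^-1 ^+ p - a^-1 = - (a ^+ p - a) * a^-1 ^+ p.+1.
  rewrite exprSr mulNr mulrBl opprB !mulrA -exprMn mulfV // expr1n mul1r.
  by rewrite mulrAC mulfV // mul1r.
by rewrite -[1]addr0; apply: bigOM (bigON a_frob) (bigOX0 _ (bigO_invf_unit _ _)).
Qed.

Definition poly_bigO (P : {poly K}) c := forall i, O P`_i c.

Lemma poly_bigOW P c d : poly_bigO P c -> d <= c -> poly_bigO P d.
Proof. by move=> P_c dc i; apply: bigOW (P_c i) dc. Qed.

Lemma poly_bigOD P Q c : poly_bigO P c -> poly_bigO Q c -> poly_bigO (P + Q) c.
Proof. by move=> P_c Q_c i; rewrite coefD; apply: bigOD. Qed.

Lemma poly_bigO_sum (I : Type) (r : seq I) (C : pred I) (F : I -> {poly K}) c :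
  (forall i, C i -> poly_bigO (F i) c) -> poly_bigO (\sum_(i <- r | C i) F i) c.
Proof. by move=> F_c k; rewrite coef_sum; apply: bigO_sum => i Ci; apply: F_c. Qed.

Lemma poly_bigO_monomial a k c : O a c -> poly_bigO (a *: 'X^k) c.
Proof.
by move=> a_c i; rewrite coefZ coefXn; case: eqP => _; rewrite ?mulr1 ?mulr0 //; left.
Qed.

Lemma poly_bigOM P Q c d : poly_bigO P c -> poly_bigO Q d -> poly_bigO (P * Q) (c + d).
Proof. by move=> P_c Q_d i; rewrite coefM; apply: bigO_sum => j _; apply: bigOM. Qed.

Lemma poly_bigO_mulrn_dvd P c m :
  poly_bigO P c -> (p %| m)%N -> poly_bigO (P *+ m) (1 + c).
Proof. by move=> P_c p_dvd_m i; rewrite coefMn; apply: bigO_mulrn_dvd. Qed.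

Lemma poly_bigOXn k : poly_bigO 'X^k 0.
Proof. by move=> i; rewrite coefXn; case: eqP => _; [apply: bigO1 | left]. Qed.

Lemma poly_bigOX0 P k : poly_bigO P 0 -> poly_bigO (P ^+ k) 0.
Proof.
move=> P_int; elim: k => [|k IHk]; first exact: poly_bigOXn 0.
by rewrite exprS -[0]addr0; apply: poly_bigOM.
Qed.

Lemma horner_bigO_terms (P : {poly K}) x c :
  (forall i, O (P`_i * x ^+ i) c) -> O P.[x] c.
Proof. by move=> terms_c; rewrite horner_coef; apply: bigO_sum. Qed.

Lemma horner_bigO (P : {poly K}) x c : poly_bigO P c -> O x 0 -> O P.[x] c.
Proof.
move=> P_c x_int; apply: horner_bigO_terms => i; rewrite -[c]addr0.
exact: bigOM (P_c i) (bigOX0 i x_int).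
Qed.

Lemma poly_bigO_frobenius_sum (I : Type) (r : seq I) (F : I -> {poly K}) :
  (forall i, poly_bigO (F i) 0) ->
  poly_bigO ((\sum_(i <- r) F i) ^+ p - \sum_(i <- r) F i ^+ p) 1.
Proof.
move=> F_int; elim: r => [|i r IHr].
  by rewrite !big_nil expr0n gtn_eqF ?prime_gt0 // subrr => k; rewrite coef0; left.
rewrite !big_cons; set S := \sum_(j <- r) F j.
have S_int : poly_bigO S 0 by apply: poly_bigO_sum.
have -> : (F i + S) ^+ p - (F i ^+ p + \sum_(j <- r) F j ^+ p)
    = ((F i + S) ^+ p - F i ^+ p - S ^+ p) + (S ^+ p - \sum_(j <- r) F j ^+ p).
  by ring.
apply: poly_bigOD IHr; rewrite exprD_sub_ends ?prime_gt0 // big_nat_cond.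
apply: poly_bigO_sum => j /andP[/andP[j_gt0 ltjp] _].
have term_int : poly_bigO (F i ^+ (p - j) * S ^+ j) 0.
  by rewrite -[0]addr0; apply: poly_bigOM; apply: poly_bigOX0.
apply: poly_bigOW (poly_bigO_mulrn_dvd term_int (prime_dvd_bin p_pr _)) _.
  by rewrite j_gt0.
by rewrite addr0.
Qed.

Lemma poly_bigO_frobenius (P : {poly K}) :
  poly_bigO P 0 -> (forall i, O (P`_i ^+ p - P`_i) 1) ->
  poly_bigO (P ^+ p - (P \Po 'X^p)) 1.
Proof.
move=> P_int P_frob.
have frobE : \sum_(i < size P) (P`_i *: 'X^i) ^+ p - (P \Po 'X^p)
    = \sum_(i < size P) (P`_i ^+ p - P`_i) *: 'X^(i * p).
  rewrite comp_polyE -sumrB; apply: eq_bigr => i _.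
  by rewrite exprZn scalerBl -!exprM mulnC.
rewrite -(subrK (\sum_(i < size P) (P`_i *: 'X^i) ^+ p) (P ^+ p)) -addrA frobE.
apply: poly_bigOD.
  rewrite -{1}[P]coefK poly_def; apply: poly_bigO_frobenius_sum => i.
  exact: poly_bigO_monomial.
by apply: poly_bigO_sum => i _; apply: poly_bigO_monomial.
Qed.

Lemma horner_bigO_frobenius (P : {poly K}) x :
  poly_bigO P 0 -> (forall i, O (P`_i ^+ p - P`_i) 1) -> O x 0 ->
  O (P.[x] ^+ p - P.[x ^+ p]) 1.
Proof.
move=> P_int P_frob x_int.
have -> : P.[x] ^+ p - P.[x ^+ p] = (P ^+ p - (P \Po 'X^p)).[x].
  by rewrite hornerD hornerN horner_exp horner_comp hornerXn.
exact: horner_bigO (poly_bigO_frobenius P_int P_frob) x_int.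
Qed.

Lemma bigO_subrX_prime a b c : O a 0 -> O b 0 -> O (a - b) c -> 1 <= c ->
  O (a ^+ p - b ^+ p) (c + 1).
Proof.
move=> a_int b_int ab_c c_ge1; have c_ge0 : 0 <= c by apply: le_trans c_ge1.
have -> : a ^+ p - b ^+ p
    = ((a - b + b) ^+ p - (a - b) ^+ p - b ^+ p) + (a - b) ^+ p.
  by rewrite subrK addrAC subrK.
apply: bigOD.
  rewrite exprD_sub_ends ?prime_gt0 // big_nat_cond.
  apply: bigO_sum => i /andP[/andP[i_gt0 ltip] _]; rewrite [c + 1]addrC.
  apply: bigO_mulrn_dvd; last by apply: prime_dvd_bin => //; rewrite i_gt0.
  rewrite -[c]addr0; apply: bigOM (bigOX0 _ b_int).
  by apply: bigOW (bigOX (p - i) ab_c) _; rewrite ler_peMl // ler1n subn_gt0.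
apply: bigOW (bigOX p ab_c) _.
have p_ge2 : (2 : rat) <= p%:R by rewrite ler_nat prime_gt1.
nra.
Qed.

Lemma bigO_subrX_pexpn a b j : O a 0 -> O b 0 -> O (a - b) 1 ->
  O (a ^+ (p ^ j) - b ^+ (p ^ j)) (1 + j%:R).
Proof.
move=> a_int b_int ab_1; elim: j => [|j IHj]; first by rewrite !expn0 !expr1 addr0.
rewrite expnSr !exprM -natr1 addrA.
by apply: bigO_subrX_prime IHj _; [apply: bigOX0 | apply: bigOX0 | rewrite lerDl].
Qed.

Local Notation s := (trunc_exp K p).

Lemma val_fact i : (i < p)%N -> (i`!%:R : K) != 0 /\ v i`!%:R = 0.
Proof. by move=> ltip; apply/val_natr_coprime/prime_ndvd_fact. Qed.

Lemma poly_bigO_trunc_exp : poly_bigO s 0.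
Proof.
move=> i; rewrite coef_poly; case: ltnP => [ltip|_]; last by left.
by have [] := val_fact ltip; apply: bigO_invf_unit.
Qed.

Lemma trunc_exp_coef_frobenius i : O (s`_i ^+ p - s`_i) 1.
Proof.
rewrite coef_poly; case: ltnP => [ltip|_].
  have [f_neq0 f_val] := val_fact ltip.
  exact: bigO_invf_frobenius f_neq0 f_val (bigO_natr_frobenius _).
by rewrite expr0n gtn_eqF ?prime_gt0 // subr0; left.
Qed.

Lemma horner_trunc_exp_frobenius x : O x 0 -> O (s.[x] ^+ p - s.[x ^+ p]) 1.
Proof. exact: horner_bigO_frobenius poly_bigO_trunc_exp trunc_exp_coef_frobenius. Qed.

Lemma trunc_exp_iter_frobenius k z : O z 0 ->
  O (s.[z] ^+ (p ^ k.+1) - s.[z ^+ (p ^ k)] ^+ p) 2.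
Proof.
elim: k z => [|k IHk] z z_int; first by rewrite expn0 expr1 expn1 subrr; left.
have zp_int : O (z ^+ p) 0 by apply: bigOX0.
have s_int y : O y 0 -> O s.[y] 0 by apply: horner_bigO poly_bigO_trunc_exp.
rewrite -(subrK (s.[z ^+ p] ^+ (p ^ k.+1)) (s.[z] ^+ _)) -addrA.
apply: bigOD; last by have := IHk _ zp_int; rewrite -exprM -expnS.
rewrite expnS exprM.
apply: bigOW (bigO_subrX_pexpn k.+1 (bigOX0 _ (s_int _ z_int)) (s_int _ zp_int)
                (horner_trunc_exp_frobenius z_int)) _.
by rewrite -natr1; have := ler0n rat k; lra.
Qed.

Lemma trunc_exp_frobenius_linear x c : 0 <= c -> p%:R * c <= 1 -> O x c ->
  O (s.[x] ^+ p - s.[x ^+ p] - p%:R * x) (1 + p%:R * c).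
Proof.
move=> c_ge0 pc_le1 x_c; have x_int : O x 0 := bigOW x_c c_ge0.
have -> : s.[x] ^+ p - s.[x ^+ p] - p%:R * x
    = (s ^+ p - (s \Po 'X^p) - p%:R *: 'X).[x].
  by rewrite !hornerD !hornerN hornerZ hornerX horner_exp horner_comp hornerXn.
apply: horner_bigO_terms => i; rewrite !coefB coefZ coefX.
have [ltip|leqi] := ltnP i p.
  rewrite (coef_trunc_exp_exp Lp_char0) // coef_comp_poly_Xn ?prime_gt0 //.
  case: i ltip => [|[|i]] ltip.
  - left; rewrite dvdn0 div0n coef_poly (prime_gt0 p_pr) expr0 div1r subrr /=.
    by rewrite mulr0 subrr mul0r.
  - left; rewrite (negbTE (prime_ndvd_fact p_pr ltip)) /= expr1 mulr1 subr0.
    by rewrite divr1 subrr mul0r.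
  - rewrite gtnNdvd // subr0 mulr0 subr0.
    have p_1 : O p%:R 1.
      by apply: bigOW (bigO_mulrn_dvd bigO1 (dvdnn p)) _; rewrite addr0.
    have [f_neq0 f_val] := val_fact ltip.
    have coef_i := bigOM (bigOX i.+2 p_1) (bigO_invf_unit f_neq0 f_val).
    apply: bigOW (bigOM coef_i (bigOX0 i.+2 x_int)) _.
    by rewrite mulr1 !addr0 -!natr1; have := ler0n rat i; lra.
have p_gt1 := prime_gt1 p_pr.
rewrite (_ : (i == 1)%N = false) ?mulr0 ?subr0; last by apply/negbTE/eqP; lia.
have := poly_bigO_frobenius poly_bigO_trunc_exp trunc_exp_coef_frobenius i.
rewrite coefB => frob_i; apply: bigOW (bigOM frob_i (bigOX i x_c)) _.
by rewrite lerD2l ler_wpM2r // ler_nat.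
Qed.

Lemma trunc_exp_teichmuller (t : nat -> K) x c :
  (forall l, (1 <= l < p)%N -> teich_of p v l`! (t l)) -> 0 <= c -> O x c ->
  O (s.[x] - 1 - \sum_(1 <= l < p) (t l)^-1 * x ^+ l) (1 + c).
Proof.
move=> teich c_ge0 x_c; have p_pred_gt0 : (0 < p - 1)%N by rewrite subn_gt0 prime_gt1.
rewrite horner_trunc_exp -(big_mkord xpredT (fun i => (i`!%:R)^-1 * x ^+ i)).
rewrite big_ltn ?prime_gt0 // expr0 mulr1 fact0 invr1 [1 + _]addrC addrK.
rewrite -sumrB big_nat_cond.
apply: bigO_sum => l /andP[/andP[l_gt0 ltlp] _].
have /teich[tl_root tl_cong] : (1 <= l < p)%N by rewrite l_gt0.
have [tl_neq0 tl_val] := val_unity_root p_pred_gt0 tl_root.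
have [f_neq0 f_val] := val_fact ltlp.
have -> : (l`!%:R)^-1 * x ^+ l - (t l)^-1 * x ^+ l
    = (t l - l`!%:R) * ((l`!%:R)^-1 * (t l)^-1) * x ^+ l.
  by field; rewrite f_neq0 tl_neq0.
have inv_int : O ((l`!%:R)^-1 * (t l)^-1) 0.
  by rewrite -[0]addr0; apply: bigOM; apply: bigO_invf_unit.
apply: bigOW (bigOM (bigOM tl_cong inv_int) (bigOX l x_c)) _.
by rewrite addr0 lerD2l ler_peMl // ler1n.
Qed.

Lemma trunc_exp_expansion (t : nat -> K) j pi x c :
  (forall l, (1 <= l < p)%N -> teich_of p v l`! (t l)) ->
  0 <= c -> p%:R * c <= 1 -> O pi 0 -> O x c -> pi ^+ (p ^ j) = x ->
  O (s.[pi] ^+ (p ^ j.+1) - 1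
     - (\sum_(1 <= l < p) (t l)^-1 * (x ^+ p) ^+ l + p%:R * x)) (1 + p%:R * c).
Proof.
move=> teich c_ge0 pc_le1 pi_int x_c pi_pow.
have -> : s.[pi] ^+ (p ^ j.+1) - 1
     - (\sum_(1 <= l < p) (t l)^-1 * (x ^+ p) ^+ l + p%:R * x)
  = (s.[pi] ^+ (p ^ j.+1) - s.[x] ^+ p) + (s.[x] ^+ p - s.[x ^+ p] - p%:R * x)
    + (s.[x ^+ p] - 1 - \sum_(1 <= l < p) (t l)^-1 * (x ^+ p) ^+ l).
  by ring.
apply: bigOD; first apply: bigOD.
- have := trunc_exp_iter_frobenius j pi_int; rewrite pi_pow => /bigOW; apply.
  by lra.
- exact: trunc_exp_frobenius_linear.
- by apply: trunc_exp_teichmuller teich _ (bigOX p x_c); rewrite mulr_ge0.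
Qed.

Lemma horner_trunc_exp_sign_pw a y n :
  \sum_(l < p) ((-1) ^+ (l * n) / l`!%:R) * a ^+ l * pw (l%:R * y)
    = s.[(-1) ^+ n * a * pw y].
Proof.
rewrite horner_trunc_exp; apply: eq_bigr => l _.
by rewrite pw_natM mulnC exprM; set e := (-1) ^+ n; rewrite !exprMn; ring.
Qed.

Lemma sum_sign_pw (r : seq nat) (t : nat -> K) a y :
  \sum_(l <- r) ((-1) ^+ l / t l) * a ^+ l * pw (l%:R * y)
    = \sum_(l <- r) (t l)^-1 * (- a * pw y) ^+ l.
Proof.
apply: eq_bigr => l _.
by rewrite pw_natM exprMn (exprNn a) -!mulrA (mulrCA ((-1) ^+ l)).
Qed.

Lemma sign_root_pw_expn z y n j : odd p -> z ^+ p = - z ->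
  ((-1) ^+ n * z * pw y) ^+ (p ^ j) = (-1) ^+ (n + j) * z * pw ((p ^ j)%N%:R * y).
Proof.
move=> p_odd zp.
have sign_pj : (-1 : K) ^+ (p ^ j) = -1 by rewrite -signr_odd oddX p_odd orbT.
rewrite 2!exprMn exprAC sign_pj (expr_expn_odd _ p_odd zp) pw_natM.
by rewrite mulrA -exprD.
Qed.

End Valuation.

Unset Implicit Arguments.

Theorem proposition3p15 (p n : nat) (K : fieldType) (v : K -> rat)
  (pw : rat -> K) (zeta : K) (t : nat -> K) :
  prime p -> (3 <= p)%N -> (2 <= n)%N ->
  Lp_model p v pw ->
  (2 * (p - 1))%N.-primitive_root zeta ->
  (forall l : nat, (1 <= l < p)%N -> teich_of p v (l`!) (t l)) ->
  bigO v
    ((\sum_(l < p)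
        ((-1) ^+ (l * n) / (l`!)%:R) * zeta ^+ l
          * pw (l%:R / (p ^ (n - 1) * (p - 1))%N%:R)) ^+ (p ^ (n - 1)) - 1
     - (\sum_(1 <= l < p) ((-1) ^+ l / t l) * zeta ^+ l * pw (l%:R / (p - 1)%N%:R)
        + zeta * pw (1 + 1 / (p * (p - 1))%N%:R)))
    (1 + 1 / (p - 1)%N%:R).
Proof.
move=> p_pr p_ge3 n_ge2 Lp zeta_prim teich.
have p_odd : odd p by case/even_prime: p_pr p_ge3 => [->|].
have p_pred_gt0 : (0 < p - 1)%N by rewrite subn_gt0 prime_gt1.
have zeta_p : zeta ^+ p = - zeta.
  by rewrite -(subnK (prime_gt0 p_pr)) exprD (prim_expr_half p_pred_gt0 zeta_prim) mulN1r.
have zeta_int : bigO v zeta 0.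
  by apply: (bigO_unity_root Lp) (prim_expr_order zeta_prim); rewrite muln_gt0 p_pred_gt0.
case: n n_ge2 => [|[|j]] // _; rewrite subSS subn0.
set c : rat := 1 / (p * (p - 1))%N%:R; set x := zeta * pw c.
have p_neq0 : (p%:R : rat) != 0 by rewrite pnatr_eq0 -lt0n prime_gt0.
have p1_neq0 : ((p - 1)%N%:R : rat) != 0 by rewrite pnatr_eq0 -lt0n.
have pcE : p%:R * c = 1 / (p - 1)%N%:R by rewrite /c natrM; field; rewrite p_neq0 p1_neq0.
have xp : x ^+ p = - zeta * pw (p - 1)%N%:R^-1.
  by rewrite exprMn zeta_p -(pw_natM Lp) pcE mul1r.
rewrite (horner_trunc_exp_sign_pw Lp) (sum_sign_pw Lp) -xp (pwD Lp) (pw1 Lp) mulrCA -pcE.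
apply: (trunc_exp_expansion p_pr Lp teich _ _ _ (bigO_pw Lp c zeta_int)).
- exact: divr_ge0.
- by rewrite pcE mul1r invf_le1 ?ler1n ?ltr0n.
- have sign_zeta_int : bigO v ((-1) ^+ j.+2 * zeta) 0.
    by rewrite -[0]addr0; apply: (bigOM Lp) (bigOX0 Lp _ (bigON Lp (bigO1 Lp))) zeta_int.
  by apply: bigOW (bigO_pw Lp _ sign_zeta_int) _; rewrite invr_ge0 ler0n.
rewrite (sign_root_pw_expn Lp _ _ _ p_odd zeta_p) -signr_odd oddD /= negbK addbb mul1r.
congr (_ * pw _); rewrite /c !natrM !natrX exprS; field.
by rewrite p1_neq0 p_neq0 expf_neq0.
Qed.
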